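(* The cardinal $\mathfrak{gp}$ is well-defined (i.e. some cardinal $\kappa$ has the defining property), and $\aleph_1\leq\mathfrak{gp}\leq 2^{\aleph_0}$.
   Context: $\mathfrak{gp}$ is the minimal cardinal $\kappa$ such that every family (repetitions allowed) $\{C_\alpha:\alpha<\kappa^+\}$ of club subsets of $\omega_1$ contains a subfamily $\{C_{\alpha_\beta}:\beta<\omega_1\}$ (distinct indices $\alpha_\beta$) whose intersection is a club subset of $\omega_1$. *)

(* Cardinals are represented by types, compared via injections. *)
From Stdlib Require Import Classical.

Definition card_le (A B : Type) : Prop :=
  exists f : A -> B, forall x y, f x = f y -> x = y.

Definition card_lt (A B : Type) : Prop := card_le A B /\ ~ card_le B A.

Definition is_succ_card (K I : Type) : Prop :=
  card_lt K I /\ forall J : Type, card_lt J I -> card_le J K.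

Definition is_omega1 (W : Type) (lt : W -> W -> Prop) : Prop :=
  (forall x, ~ lt x x) /\
  (forall x y z, lt x y -> lt y z -> lt x z) /\
  (forall x y, lt x y \/ x = y \/ lt y x) /\
  well_founded lt /\
  ~ card_le W nat /\
  (forall a : W, card_le {b : W | lt b a} nat).

Definition unbounded (W : Type) (lt : W -> W -> Prop) (C : W -> Prop) : Prop :=
  forall a, exists b, C b /\ lt a b.

Definition closed (W : Type) (lt : W -> W -> Prop) (C : W -> Prop) : Prop :=
  forall a, (exists g, C g /\ lt g a) ->
            (forall b, lt b a -> exists g, C g /\ lt b g /\ lt g a) ->
            C a.

Definition club (W : Type) (lt : W -> W -> Prop) (C : W -> Prop) : Prop :=
  closed W lt C /\ unbounded W lt C.

(* The defining property of gp, for a candidate cardinal K: every family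
   (repetitions allowed) of club sets indexed by a set of size K^+ contains an
   omega_1-subfamily with distinct indices whose intersection is club. *)
Definition gp_property (W : Type) (lt : W -> W -> Prop) (K : Type) : Prop :=
  forall (I : Type), is_succ_card K I ->
  forall C : I -> W -> Prop, (forall i, club W lt (C i)) ->
  exists f : W -> I, (forall x y, f x = f y -> x = y) /\
    club W lt (fun a => forall b, C (f b) a).

From Stdlib Require Import Classical ClassicalEpsilon FunctionalExtensionality PropExtensionality ProofIrrelevance.
From Stdlib Require Import Arith Lia Cantor.
From mathcomp Require ssreflect ssrfun ssrbool eqtype boolp wochoice.

(* Well-order 2^N: if 2^N has
   the property, the least initial segment with it (or 2^N itself) is a least cardinal with
   it, by comparability of cardinals. 2^N has it by Galvin's argument: given clubs indexed by
   I with |I| > 2^N, some index i0 has, for every d < omega_1, more than 2^N indices whose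
   clubs agree with C i0 on [0, d], because these traces are coded by reals. Choosing distinct
   such indices along omega_1, the intersection of the chosen clubs contains the diagonal
   intersection of them with C i0, which is club. Conversely no countable K has the property:
   K^+ embeds into omega_1, and the tails above the images of K^+ admit no omega_1-subfamily
   with unbounded intersection, since a point above all of them would make omega_1 countable. *)

Definition strict_wellorder {T : Type} (R : T -> T -> Prop) : Prop :=
  (forall x y z, R x y -> R y z -> R x z) /\
  (forall x y, R x y \/ x = y \/ R y x) /\
  well_founded R.

Module WellOrdering.
Import ssreflect ssrfun ssrbool eqtype boolp wochoice.

Lemma exists_strict_wellorder (T : Type) : exists R : T -> T -> Prop, strict_wellorder R.
Proof.
have [R Rwo] := @well_ordering_principle {classic T}.
have Rmin (A : T -> Prop) : (exists x, A x) ->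
    exists z, [/\ A z, forall x, A x -> R z x
             & forall z', A z' -> (forall x, A x -> R z' x) -> z' = z].
  move=> [x Ax]; have [|z [[/asboolP Az lbz] uniq]] := Rwo (fun z => `[< A z >]).
    by exists x; apply/asboolP.
  exists z; split=> // [y Ay|z' Az' lbz']; first exact/lbz/asboolP.
  apply/esym/uniq; split; first exact/asboolP.
  by move=> y /asboolP/lbz'.
have Rrefl x : R x x.
  have [|z [Ez lbz _]] := Rmin (fun z => z = x); first by exists x.
  by move: (lbz x erefl); rewrite Ez.
have Ranti x y : R x y -> R y x -> x = y.
  move=> Rxy Ryx; have [|z [_ _ uniq]] := Rmin (fun z => z = x \/ z = y).
    by exists x; left.
  have -> : x = z by apply: uniq; [left | move=> w [->|->]].
  by apply/esym/uniq; [right | move=> w [->|->]].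
have Rtot x y : R x y \/ R y x.
  have [|z [[->|->] lbz _]] := Rmin (fun z => z = x \/ z = y); first by exists x; left.
    by left; apply: lbz; right.
  by right; apply: lbz; left.
exists (fun x y : T => ~ R y x); split; [|split].
- move=> x y z nRyx nRzy Rzx.
  have [|m [Am lbm _]] := Rmin (fun w => w = x \/ w = y \/ w = z); first by exists x; left.
  case: Am => [Em|[Em|Em]]; subst m.
  + by rewrite (Ranti _ _ Rzx (lbm z (or_intror (or_intror erefl)))) in nRzy;
      apply/nRzy/lbm; right; left.
  + by apply/nRyx/lbm; left.
  + by apply/nRzy/lbm; right; left.
- move=> x y; have [Ryx|nRyx] := EM (R y x); last by left.
  have [Rxy|nRxy] := EM (R x y); last by right; right.
  by right; left; apply: Ranti.
- move=> x; apply: NNPP => nAx.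
  have [|m [nAm lbm _]] := Rmin (fun z => ~ Acc (fun x y : T => ~ R y x) z); first by exists x.
  apply: nAm; constructor => y nRmy; apply: NNPP => nAy.
  exact/nRmy/lbm.
Qed.

End WellOrdering.

Lemma card_le_refl (A : Type) : card_le A A.
Proof. exists (fun x => x); auto. Qed.

Lemma card_le_trans (A B C : Type) : card_le A B -> card_le B C -> card_le A C.
Proof. intros [f Hf] [g Hg]; exists (fun x => g (f x)); auto. Qed.

Lemma card_le_sig (A : Type) (P : A -> Prop) : card_le {x | P x} A.
Proof.
  exists (@proj1_sig _ _); intros [x px] [y py] e; simpl in e; subst.
  apply subset_eq_compat; reflexivity.
Qed.

Lemma card_le_empty (A B : Type) : ~ inhabited A -> card_le A B.
Proof.
  intros nA; exists (fun a => False_rect B (nA (inhabits a))).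
  intros a; destruct (nA (inhabits a)).
Qed.

Lemma card_le_prod (A B C D : Type) : card_le A C -> card_le B D -> card_le (A * B) (C * D).
Proof.
  intros [f Hf] [g Hg]; exists (fun p => (f (fst p), g (snd p))).
  intros [a b] [a' b'] e; injection e; intros; f_equal; auto.
Qed.

Definition inj_on {X Y : Type} (P : X -> Prop) (g : X -> Y) : Prop :=
  forall x y, P x -> P y -> g x = g y -> x = y.

Lemma card_le_sig_inj_on {X Y : Type} (P : X -> Prop) (g : X -> Y) :
  inj_on P g -> card_le {x | P x} Y.
Proof.
  intros Hg; exists (fun s => g (proj1_sig s)).
  intros [x px] [y py] e; apply subset_eq_compat; auto.
Qed.

Lemma inj_on_of_card_le_sig {X Y : Type} (P : X -> Prop) :
  inhabited Y -> card_le {x | P x} Y -> exists g : X -> Y, inj_on P g.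
Proof.
  intros [y0] [g Hg].
  exists (fun x => match excluded_middle_informative (P x) with
                   | left p => g (exist _ x p) | right _ => y0 end).
  intros x y px py.
  destruct (excluded_middle_informative (P x)); [|contradiction].
  destruct (excluded_middle_informative (P y)); [|contradiction].
  intros e; apply Hg in e; exact (f_equal (@proj1_sig _ _) e).
Qed.

Definition image_below {X Y : Type} (R : X -> X -> Prop) (g : X -> Y) (x : X) (y : Y) : Prop :=
  exists x', R x' x /\ g x' = y.

Lemma image_below_ext {X Y : Type} (R : X -> X -> Prop) (g h : X -> Y) (x : X) :
  (forall x', R x' x -> g x' = h x') -> image_below R g x = image_below R h x.
Proof.
  intros Hgh; apply functional_extensionality; intros y.
  apply propositional_extensionality; split; intros [x' [Rx' e]];
    exists x'; split; auto; rewrite <- e; [symmetry|]; auto.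
Qed.

Lemma wf_rec {X Y : Type} (R : X -> X -> Prop) (P : X -> (Y -> Prop) -> Y -> Prop) :
  well_founded R -> inhabited Y ->
  (forall x (g : X -> Y), exists y, P x (image_below R g x) y) ->
  exists f : X -> Y, forall x, P x (image_below R f x) (f x).
Proof.
  intros wfR [y0] HP.
  destruct (choice (fun xg y => P (fst xg) (image_below R (snd xg) (fst xg)) y))
    as [F HF]; [intros [x g]; apply HP|].
  set (restrict := fun x (rec : forall x', R x' x -> Y) x' =>
         match excluded_middle_informative (R x' x) with
         | left h => rec x' h | right _ => y0 end).
  set (f := Fix wfR (fun _ => Y) (fun x rec => F (x, restrict x rec))).
  exists f; intros x.
  assert (Hfx : f x = F (x, restrict x (fun x' _ => f x'))).
  { apply (Fix_eq wfR (fun _ => Y)); intros x0 g h Hgh.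
    do 2 f_equal; apply functional_extensionality; intros x'; unfold restrict.
    destruct (excluded_middle_informative (R x' x0)); auto. }
  rewrite Hfx, <- (image_below_ext R (restrict x (fun x' _ => f x')) f x).
  - exact (HF (x, _)).
  - intros x' Rx'; unfold restrict.
    destruct (excluded_middle_informative (R x' x)); [reflexivity|contradiction].
Qed.

Lemma wf_min {X : Type} (R : X -> X -> Prop) (P : X -> Prop) :
  well_founded R -> (exists x, P x) -> exists x, P x /\ forall z, R z x -> ~ P z.
Proof.
  intros wfR [x Px]; apply NNPP; intros N.
  induction (wfR x) as [x _ IH].
  apply N; exists x; split; [exact Px|].
  intros z Rz Pz; exact (IH z Rz Pz).
Qed.

Lemma wf_rec_fresh {X Y : Type} (R : X -> X -> Prop) (Q : X -> Y -> Prop) :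
  strict_wellorder R -> inhabited Y ->
  (forall x (g : X -> Y), exists y, Q x y /\ ~ image_below R g x y) ->
  exists f : X -> Y, (forall x y, f x = f y -> x = y) /\ forall x, Q x (f x).
Proof.
  intros [_ [Rtot Rwf]] inhY HQ.
  destruct (wf_rec R (fun x S y => Q x y /\ ~ S y) Rwf inhY HQ) as [f Hf].
  exists f; split; [|intros x; apply Hf].
  intros x y e; destruct (Rtot x y) as [Rxy|[Exy|Ryx]]; auto; exfalso.
  - apply (proj2 (Hf y)); exists x; auto.
  - apply (proj2 (Hf x)); exists y; auto.
Qed.

Definition segment {T : Type} (R : T -> T -> Prop) (y : T) : Type := {t | R t y}.

Section WellOrderedType.
Variables (T : Type) (R : T -> T -> Prop).
Hypothesis HR : strict_wellorder R.

Let R_trans := proj1 HR.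
Let R_total := proj1 (proj2 HR).
Let R_wf := proj2 (proj2 HR).

Lemma card_le_segment (y1 y2 : T) : R y1 y2 \/ y1 = y2 -> card_le (segment R y1) (segment R y2).
Proof.
  intros H12.
  assert (Hsub : forall t, R t y1 -> R t y2) by (destruct H12; subst; eauto).
  exists (fun t => exist _ (proj1_sig t) (Hsub _ (proj2_sig t))).
  intros [t1 p1] [t2 p2] e; injection e; intros; subst; apply subset_eq_compat; reflexivity.
Qed.

(* [h] lists elements of [A] along [T] without repetition, for as long as [A] is not exhausted. *)
Lemma wellorder_compare (A : Type) :
  card_le T A \/ exists y, card_le A (segment R y) /\ card_le (segment R y) A.
Proof.
  destruct (classic (inhabited A)) as [inhA|nA].
  2:{ destruct (classic (inhabited T)) as [[t]|nT]; [right|left; apply card_le_empty, nT].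
      destruct (wf_min R (fun _ => True) R_wf) as [y [_ ymin]]; [exists t; auto|].
      exists y; split; apply card_le_empty; [exact nA|].
      intros [[t' Rt']]; exact (ymin t' Rt' I). }
  destruct (wf_rec R (fun t S a => (exists z, ~ S z) -> ~ S a) R_wf inhA) as [h Hh].
  { intros t g. destruct (classic (exists z, ~ image_below R g t z)) as [[z Hz]|Hn].
    - exists z; auto.
    - destruct inhA as [a]; exists a; intros Hz; contradiction. }
  set (exhausted := fun t => forall a, image_below R h t a).
  assert (hinj : forall t1 t2, ~ exhausted t1 -> ~ exhausted t2 -> h t1 = h t2 -> t1 = t2).
  { intros t1 t2 N1 N2 e.
    apply not_all_ex_not in N1; apply not_all_ex_not in N2.
    destruct (R_total t1 t2) as [R12|[E12|R21]]; auto; exfalso.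
    - apply (Hh t2 N2); exists t1; auto.
    - apply (Hh t1 N1); exists t2; auto. }
  destruct (classic (exists y, exhausted y)) as [Hex|Hn].
  - right. destruct (wf_min R _ R_wf Hex) as [y [Hy ymin]].
    destruct (choice (fun a t => R t y /\ h t = a) Hy) as [inv Hinv].
    exists y; split.
    + exists (fun a => exist _ (inv a) (proj1 (Hinv a))).
      intros a b e; injection e; intros E.
      rewrite <- (proj2 (Hinv a)), <- (proj2 (Hinv b)), E; reflexivity.
    + exists (fun t => h (proj1_sig t)).
      intros [t1 p1] [t2 p2] e; apply subset_eq_compat; apply hinj; auto.
  - left; exists h; intros t1 t2; apply hinj; intros Ht; apply Hn; eauto.
Qed.

Lemma least_card (P : Type -> Prop) :
  (forall A B, card_le A B -> card_le B A -> P A -> P B) -> P T ->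
  exists K, card_le K T /\ P K /\ forall K', P K' -> card_le K K'.
Proof.
  intros Pinv PT.
  destruct (classic (exists y, P (segment R y))) as [Hex|Hn].
  - destruct (wf_min R _ R_wf Hex) as [y0 [Py0 y0min]].
    exists (segment R y0); split; [apply card_le_sig|split; [exact Py0|]].
    intros K' PK'; destruct (wellorder_compare K') as [TK'|[y [K'y yK']]].
    + eapply card_le_trans; [apply card_le_sig|exact TK'].
    + eapply card_le_trans; [|exact yK'].
      apply card_le_segment; destruct (R_total y0 y) as [R0|[E0|R1]]; auto.
      exfalso; apply (y0min y R1); exact (Pinv _ _ K'y yK' PK').
  - exists T; split; [apply card_le_refl|split; [exact PT|]].
    intros K' PK'; destruct (wellorder_compare K') as [TK'|[y [K'y yK']]]; [exact TK'|].
    exfalso; apply Hn; exists y; exact (Pinv _ _ K'y yK' PK').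
Qed.

End WellOrderedType.

Lemma card_total (A B : Type) : card_le A B \/ card_le B A.
Proof.
  destruct (WellOrdering.exists_strict_wellorder A) as [R HR].
  destruct (wellorder_compare A R HR B) as [AB|[y [By _]]]; [left; exact AB|].
  right; eapply card_le_trans; [exact By|apply card_le_sig].
Qed.

Lemma exists_succ_card (T : Type) (R : T -> T -> Prop) (K : Type) :
  strict_wellorder R -> ~ card_le T K -> exists I, is_succ_card K I /\ card_le I T.
Proof.
  intros HR nTK.
  destruct (least_card T R HR (fun X => ~ card_le X K)) as [I [IT [nIK Imin]]]; [|exact nTK|].
  { intros A B AB BA nAK BK; apply nAK; eapply card_le_trans; eauto. }
  exists I; split; [|exact IT]; split.
  - split; [|exact nIK].
    destruct (card_total K I) as [KI|IK]; [exact KI|contradiction].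
  - intros J [JI nIJ]; apply NNPP; intros nJK; exact (nIJ (Imin J nJK)).
Qed.

Lemma gp_transfer (W : Type) (lt : W -> W -> Prop) (A B : Type) :
  card_le A B -> card_le B A -> gp_property W lt A -> gp_property W lt B.
Proof.
  intros AB BA HA I [[BI nIB] Imin]; apply HA; split; [split|].
  - eapply card_le_trans; eauto.
  - intros IA; apply nIB; eapply card_le_trans; eauto.
  - intros J JI; eapply card_le_trans; eauto.
Qed.

Lemma closed_forall {W I : Type} (lt : W -> W -> Prop) (C : I -> W -> Prop) :
  (forall i, closed W lt (C i)) -> closed W lt (fun a => forall i, C i a).
Proof.
  intros HC a [g [Cg ga]] cof i; apply HC.
  - exists g; auto.
  - intros b ba; destruct (cof b ba) as [g' [Cg' bga]]; exists g'; auto.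
Qed.

Definition countable {X : Type} (P : X -> Prop) : Prop := exists e : X -> nat, inj_on P e.

Lemma countable_sub {X : Type} (P Q : X -> Prop) :
  (forall x, P x -> Q x) -> countable Q -> countable P.
Proof. intros PQ [e He]; exists e; intros x y px py; auto. Qed.

Lemma countable_add {X : Type} (P : X -> Prop) (d : X) :
  countable P -> countable (fun x => P x \/ x = d).
Proof.
  intros [e He].
  exists (fun x => match excluded_middle_informative (P x) with
                   | left _ => S (e x) | right _ => 0 end).
  intros x y px py.
  destruct (excluded_middle_informative (P x)); destruct (excluded_middle_informative (P y));
    intros E; try discriminate.
  - injection E; auto.
  - destruct px, py; subst; tauto.
Qed.

Lemma countable_image {X Z : Type} (D : X -> Prop) (h : X -> Z) :
  countable D -> countable (fun z => exists x, D x /\ h x = z).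
Proof.
  intros [e He].
  exists (fun z => match excluded_middle_informative (exists x, D x /\ h x = z) with
                   | left p => e (proj1_sig (constructive_indefinite_description _ p))
                   | right _ => 0 end).
  intros z1 z2 p1 p2.
  destruct (excluded_middle_informative (exists x, D x /\ h x = z1)) as [q1|]; [|contradiction].
  destruct (excluded_middle_informative (exists x, D x /\ h x = z2)) as [q2|]; [|contradiction].
  destruct (constructive_indefinite_description _ q1) as [x1 [d1 e1]].
  destruct (constructive_indefinite_description _ q2) as [x2 [d2 e2]]; simpl.
  intros E; rewrite <- e1, <- e2; f_equal; auto.
Qed.

Lemma countable_enum {X : Type} (P : X -> Prop) (x0 : X) :
  countable P -> P x0 -> exists s : nat -> X, (forall n, P (s n)) /\ forall x, P x -> exists n, s n = x.
Proof.
  intros [e He] Px0.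
  destruct (choice (fun n x => P x /\ ((exists y, P y /\ e y = n) -> e x = n))) as [s Hs].
  { intros n; destruct (classic (exists y, P y /\ e y = n)) as [[y [Py ey]]|N].
    - exists y; auto.
    - exists x0; split; [exact Px0|contradiction]. }
  exists s; split; [intros n; apply Hs|].
  intros x Px; exists (e x); apply He; [apply Hs|exact Px|apply Hs; eauto].
Qed.

Lemma countable_card_le_cantor {X : Type} (P : X -> Prop) :
  countable P -> card_le {x | P x} (nat -> bool).
Proof.
  intros [e He]; apply (card_le_sig_inj_on P (fun x n => Nat.eqb n (e x))).
  intros x y px py E; apply He; auto.
  apply (f_equal (fun t => t (e x))) in E; rewrite Nat.eqb_refl in E.
  symmetry in E; apply Nat.eqb_eq in E; auto.
Qed.

Lemma cantor_diag (Q : (nat -> bool) -> Prop) : countable Q -> exists t, ~ Q t.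
Proof.
  intros [e He].
  destruct (choice (fun n t => (exists t', Q t' /\ e t' = n) -> Q t /\ e t = n)) as [pick Hpick].
  { intros n; destruct (classic (exists t', Q t' /\ e t' = n)) as [[t' Ht']|N].
    - exists t'; auto.
    - exists (fun _ => false); contradiction. }
  set (d := fun n => negb (pick n n)); exists d; intros Qd.
  destruct (Hpick _ (ex_intro _ _ (conj Qd eq_refl))) as [Qp ep].
  assert (Hd : d (e d) = negb (pick (e d) (e d))) by reflexivity.
  rewrite (He _ _ Qp Qd ep) in Hd.
  destruct (d (e d)); discriminate.
Qed.

Lemma card_le_cantor_square : card_le ((nat -> bool) * (nat -> bool)) (nat -> bool).
Proof.
  exists (fun p n => match of_nat n with (0, m) => fst p m | (_, m) => snd p m end).
  intros [a b] [a' b'] E.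
  f_equal; apply functional_extensionality; intros m;
    [pose proof (f_equal (fun t => t (to_nat (0, m))) E) as Em
    |pose proof (f_equal (fun t => t (to_nat (1, m))) E) as Em];
    cbv beta in Em; rewrite cancel_of_to in Em; exact Em.
Qed.

Lemma card_le_fibers (I K T : Type) (key : I -> K) :
  card_le K T -> (forall k, exists g : I -> T, inj_on (fun i => key i = k) g) ->
  card_le (T * T) T -> card_le I T.
Proof.
  intros [eK HeK] Hfib [p Hp].
  destruct (choice _ Hfib) as [G HG].
  exists (fun i => p (eK (key i), G (key i) i)); intros i j E.
  apply Hp in E; injection E; intros EG Ekey; apply HeK in Ekey.
  rewrite <- Ekey in EG; exact (HG (key i) i j eq_refl (eq_sym Ekey) EG).
Qed.

Section OmegaOne.
Variables (W : Type) (lt : W -> W -> Prop).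
Hypothesis Hw : is_omega1 W lt.

Lemma omega1_wellorder : strict_wellorder lt.
Proof. destruct Hw as [_ [Htr [Htot [Hwf _]]]]; exact (conj Htr (conj Htot Hwf)). Qed.

Let W_trans := proj1 omega1_wellorder.
Let W_total := proj1 (proj2 omega1_wellorder).
Let W_wf := proj2 (proj2 omega1_wellorder).
Let W_uncountable : ~ card_le W nat := proj1 (proj2 (proj2 (proj2 (proj2 Hw)))).

Lemma segment_countable (a : W) : countable (fun b => lt b a).
Proof.
  apply inj_on_of_card_le_sig; [exact (inhabits 0)|].
  exact (proj2 (proj2 (proj2 (proj2 (proj2 Hw)))) a).
Qed.

Lemma closed_segment_countable (a : W) : countable (fun b => lt b a \/ b = a).
Proof. apply countable_add, segment_countable. Qed.

(* Otherwise [W] would be a countable union of the countable sets [[0, x]], [x] in [Q]. *)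
Lemma countable_bounded (Q : W -> Prop) : countable Q -> exists u, forall x, Q x -> lt x u.
Proof.
  intros [eQ HQ]; apply NNPP; intros N.
  assert (above : forall u, exists x, Q x /\ (lt u x \/ u = x)).
  { intros u; apply NNPP; intros Nu; apply N; exists u; intros x Qx.
    destruct (W_total x u) as [xu|[E|ux]]; auto; exfalso; apply Nu; exists x; auto. }
  destruct (choice _ above) as [xu Hxu].
  destruct (choice _ closed_segment_countable) as [E HE].
  apply W_uncountable; exists (fun u => to_nat (eQ (xu u), E (xu u) u)).
  intros u v Euv; apply (f_equal of_nat) in Euv; rewrite !cancel_of_to in Euv.
  injection Euv; intros E2 E1.
  destruct (Hxu u) as [Qu lu], (Hxu v) as [Qv lv].
  assert (Exu : xu u = xu v) by (apply HQ; auto).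
  rewrite <- Exu in E2, lv; apply (HE (xu u)); auto.
Qed.

Lemma no_max (a : W) : exists b, lt a b.
Proof.
  destruct (countable_bounded _ (closed_segment_countable a)) as [u Hu].
  exists u; apply Hu; right; reflexivity.
Qed.

Lemma tail_club (c : W) : club W lt (fun a => lt c a).
Proof.
  split.
  - intros a [g [cg ga]] _; eauto.
  - intros a; destruct (W_total c a) as [ca|[E|ac]].
    + destruct (no_max a) as [b ab]; exists b; eauto.
    + destruct (no_max a) as [b ab]; exists b; subst; auto.
    + destruct (no_max c) as [b cb]; exists b; eauto.
Qed.

Definition increasing (z : nat -> W) : Prop := forall n, lt (z n) (z (S n)).

Definition is_limit (z : nat -> W) (s : W) : Prop :=
  (forall n, lt (z n) s) /\ forall b, lt b s -> exists n, lt b (z n).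

Lemma increasing_below (z : nat -> W) (b : W) (n m : nat) :
  increasing z -> n <= m -> lt b (z n) -> lt b (z m).
Proof. intros Hz nm bn; induction nm; eauto. Qed.

Lemma increasing_limit (z : nat -> W) : increasing z -> exists s, is_limit z s.
Proof.
  intros Hz.
  destruct (countable_bounded (fun w => exists n, True /\ z n = w)) as [u Hu].
  { apply countable_image; exists (fun n => n); intros n m _ _; auto. }
  destruct (wf_min lt (fun s => forall n, lt (z n) s) W_wf) as [s [Hs smin]].
  { exists u; intros n; apply Hu; eauto. }
  exists s; split; [exact Hs|].
  intros b bs; destruct (not_all_ex_not _ _ (smin b bs)) as [n Hn].
  exists (S n); destruct (W_total (z n) b) as [nb|[E|bn]]; [contradiction| |]; subst; eauto.
Qed.

Lemma closed_limit (D : W -> Prop) (z : nat -> W) (s : W) :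
  closed W lt D -> increasing z -> is_limit z s ->
  (forall n, exists m, n <= m /\ D (z m)) -> D s.
Proof.
  intros HD Hz [zs slim] cof; apply HD.
  - destruct (cof 0) as [m [_ Dm]]; eauto.
  - intros b bs; destruct (slim b bs) as [n bn]; destruct (cof n) as [m [nm Dm]].
    exists (z m); repeat split; auto; exact (increasing_below z b n m Hz nm bn).
Qed.

Lemma club_nat_inter_unbounded (D : nat -> W -> Prop) :
  (forall k, club W lt (D k)) -> unbounded W lt (fun a => forall k, D k a).
Proof.
  intros HD a.
  destruct (choice (fun p v => D (fst p) v /\ lt (snd p) v)) as [N HN].
  { intros [k u]; destruct (proj2 (HD k) u) as [v Hv]; eauto. }
  (* Cantor's pairing interleaves all the [D k], each of them infinitely often. *)
  set (z := fix z n := match n with 0 => a | S n => N (fst (of_nat n), z n) end).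
  assert (Hz : increasing z) by (intros n; apply (HN (_, z n))).
  destruct (increasing_limit z Hz) as [s [zs slim]].
  exists s; split; [|exact (zs 0)].
  intros k; apply (closed_limit (D k) z s (proj1 (HD k)) Hz (conj zs slim)).
  intros n; exists (S (to_nat (k, n))); split.
  - pose proof (to_nat_non_decreasing k n); lia.
  - change (D k (N (fst (of_nat (to_nat (k, n))), z (to_nat (k, n))))).
    rewrite cancel_of_to; apply (HN (k, _)).
Qed.

Lemma diagonal_unbounded (D : W -> Prop) (C : W -> W -> Prop) :
  club W lt D -> (forall b, club W lt (C b)) ->
  unbounded W lt (fun a => D a /\ forall b, lt b a -> C b a).
Proof.
  intros HD HC a.
  assert (step : forall u, exists v, lt u v /\ D v /\ forall b, lt b u \/ b = u -> C b v).
  { intros u.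
    destruct (countable_enum _ u (closed_segment_countable u) (or_intror eq_refl))
      as [s [_ s_onto]].
    destruct (club_nat_inter_unbounded (fun k => match k with 0 => D | S n => C (s n) end))
      with (a := u) as [v [Hv uv]]; [intros [|k]; auto|].
    exists v; repeat split; [exact uv|exact (Hv 0)|].
    intros b ub; destruct (s_onto b ub) as [n <-]; exact (Hv (S n)). }
  destruct (choice _ step) as [G HG].
  set (z := fun n => Nat.iter n G a).
  assert (Hz : increasing z) by (intros n; apply (HG (z n))).
  destruct (increasing_limit z Hz) as [s Hs].
  exists s; split; [split|exact (proj1 Hs 0)].
  - apply (closed_limit D z s (proj1 HD) Hz Hs); intros n.
    exists (S n); split; [lia|apply (HG (z n))].
  - intros b bs; destruct (proj2 Hs b bs) as [n bn].
    apply (closed_limit (C b) z s (proj1 (HC b)) Hz Hs); intros n'.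
    exists (S (Nat.max n n')); split; [lia|].
    apply (HG (z (Nat.max n n'))); left; apply (increasing_below z b n); auto; lia.
Qed.

Lemma club_forall_of_agree (D : W -> Prop) (C : W -> W -> Prop) :
  club W lt D -> (forall b, club W lt (C b)) ->
  (forall b a, lt a b \/ a = b -> D a -> C b a) -> club W lt (fun a => forall b, C b a).
Proof.
  intros HD HC agree; split; [apply closed_forall; intros b; apply HC|].
  intros u; destruct (diagonal_unbounded D C HD HC u) as [a [[Da Ca] ua]].
  exists a; split; [|exact ua]; intros b.
  destruct (W_total b a) as [ba|[E|ab]]; auto.
Qed.

Lemma card_le_omega1_cantor : card_le W (nat -> bool).
Proof.
  destruct (wf_rec_fresh lt (fun (_ : W) (_ : nat -> bool) => True) omega1_wellorder
                         (inhabits (fun _ => false))) as [h [hinj _]]; [|exists h; exact hinj].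
  intros x g; destruct (cantor_diag (image_below lt g x)) as [t Ht].
  - apply countable_image, segment_countable.
  - exists t; auto.
Qed.

Definition agree_upto {I : Type} (C : I -> W -> Prop) (d : W) (i j : I) : Prop :=
  forall x, lt x d \/ x = d -> (C i x <-> C j x).

(* Each [C i] restricted to [[0, d]] is coded by a real, so if every index had a small
   agreement class at some [d], then [I] would inject into [W * 2^N * 2^N]. *)
Lemma exists_large_agree_class (I : Type) (C : I -> W -> Prop) :
  ~ card_le I (nat -> bool) ->
  exists i0, forall d, ~ card_le {j | agree_upto C d i0 j} (nat -> bool).
Proof.
  intros nIT; apply NNPP; intros N.
  assert (small : forall i, exists d, card_le {j | agree_upto C d i j} (nat -> bool)).
  { intros i; apply NNPP; intros Ni; apply N; exists i; intros d Hd; apply Ni; eauto. }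
  destruct (choice _ small) as [dl Hdl].
  destruct (choice (fun d (s : nat -> W) => forall x, lt x d \/ x = d -> exists n, s n = x))
    as [enum Henum].
  { intros d; destruct (countable_enum _ d (closed_segment_countable d) (or_intror eq_refl))
      as [s [_ s_onto]]; eauto. }
  set (trace := fun i d n => if excluded_middle_informative (C i (enum d n)) then true else false).
  assert (trace_agree : forall i j d, trace i d = trace j d -> agree_upto C d i j).
  { intros i j d E x xd; destruct (Henum d x xd) as [n <-].
    apply (f_equal (fun t => t n)) in E; unfold trace in E.
    destruct (excluded_middle_informative (C i (enum d n)));
      destruct (excluded_middle_informative (C j (enum d n))); try discriminate; tauto. }
  apply nIT, (card_le_fibers I _ _ (fun i => (dl i, trace i (dl i)))).
  - eapply card_le_trans; [|exact card_le_cantor_square].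
    apply card_le_prod; [exact card_le_omega1_cantor|apply card_le_refl].
  - intros [d t]; destruct (classic (exists i, dl i = d /\ trace i d = t)) as [[i [di ti]]|none].
    + destruct (inj_on_of_card_le_sig _ (inhabits (fun _ => false)) (Hdl i)) as [g Hg].
      exists g; intros j1 j2 E1 E2; injection E1; injection E2; intros t2 d2 t1 d1.
      subst; apply Hg; apply trace_agree; congruence.
    + exists (fun _ _ => false); intros j1 j2 E1; injection E1; intros t1 d1.
      exfalso; apply none; exists j1; subst; auto.
  - exact card_le_cantor_square.
Qed.

(* Galvin's argument: enumerate distinct indices whose clubs agree with [C i0] up to
   the stage at which they are chosen; the intersection then contains a diagonal intersection. *)
Lemma gp_le_continuum : gp_property W lt (nat -> bool).
Proof.
  intros I [[_ nIT] _] C HC.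
  destruct (exists_large_agree_class I C nIT) as [i0 Hi0].
  destruct (wf_rec_fresh lt (fun x i => agree_upto C x i0 i) omega1_wellorder (inhabits i0))
    as [f [finj Hf]].
  { intros x g; apply NNPP; intros N; apply (Hi0 x), countable_card_le_cantor.
    apply (countable_sub _ (image_below lt g x)); [|apply countable_image, segment_countable].
    intros j Hj; apply NNPP; intros nj; apply N; exists j; auto. }
  exists f; split; [exact finj|].
  apply (club_forall_of_agree (C i0)); auto.
  intros b a ab Ca; exact (proj1 (Hf b a ab) Ca).
Qed.

Lemma omega1_le_gp (K : Type) : gp_property W lt K -> card_le W K.
Proof.
  intros HK; apply NNPP; intros nWK.
  destruct (classic (inhabited W)) as [[w]|nW]; [|exact (nWK (card_le_empty W K nW))].
  destruct (exists_succ_card W lt K omega1_wellorder nWK) as [I [HI [g ginj]]].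
  destruct (HK I HI (fun i a => lt (g i) a) (fun i => tail_club (g i))) as [f [finj [_ Hunb]]].
  destruct (Hunb w) as [x [Hx _]]; destruct (segment_countable x) as [e He].
  apply W_uncountable; exists (fun b => e (g (f b))); intros a b E.
  apply finj, ginj, He; auto.
Qed.

End OmegaOne.

Theorem mainTheorem11 :
  forall (W : Type) (lt : W -> W -> Prop), is_omega1 W lt ->
  exists K : Type,
    gp_property W lt K /\
    (forall K' : Type, gp_property W lt K' -> card_le K K') /\
    card_le W K /\
    card_le K (nat -> bool).
Proof.
  intros W lt Hw.
  destruct (WellOrdering.exists_strict_wellorder (nat -> bool)) as [R HR].
  destruct (least_card _ R HR (gp_property W lt) (gp_transfer W lt) (gp_le_continuum W lt Hw))
    as [K [KT [HK Kmin]]].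
  exists K; repeat split; auto.
  exact (omega1_le_gp W lt Hw K HK).
Qed.
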